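(* Let $0<a\le b$. For $\mathbf v_c\in[a,b]^4$ let $\mathbf p_c$ be the unique maximizer of $L_{\mathbf v_c}$ over the simplex $\Delta$, and define $$R_{\max}(c)=\max_{\mathbf v_t\in[a,b]^4}\left[1-\left(\frac{L_{\mathbf v_t}(\mathbf p_c)}{\max_{\mathbf p\in\Delta}L_{\mathbf v_t}(\mathbf p)}\right)^{1/3}\right].$$ Then, as $\mathbf v_c$ ranges over $[a,b]^4$, $R_{\max}(c)$ attains its minimum if and only if $\mathbf p_c=(1/4,1/4,1/4,1/4)$, the uniform design.
   Context: Setting: a $2^2$ experiment with binary response under a generalized linear model with main-effects linear predictor $\eta=\beta_0+\beta_1x_1+\beta_2x_2$. A design is a vector $\mathbf p=(p_1,p_2,p_3,p_4)$ in the simplex $\Delta=\{p_i\ge0,\ \sum_i p_i=1\}$. With $w_i>0$ the GLM weights at the four design points and $v_i=1/w_i$, the $D$-criterion equals $16w_1w_2w_3w_4L_{\mathbf v}(\mathbf p)$ where $$L_{\mathbf v}(\mathbf p)=v_4p_1p_2p_3+v_3p_1p_2p_4+v_2p_1p_3p_4+v_1p_2p_3p_4 .$$ For every $\mathbf v$ with positive entries, $L_{\mathbf v}$ has a unique maximizer on $\Delta$ (the locally $D$-optimal design). $\mathbf v_c$ is the assumed value, $\mathbf v_t$ the true value, and the bracketed quantity is the relative loss of efficiency of using $\mathbf p_c$ when $\mathbf v_t$ is true; $R_{\max}(c)$ is a function of $\mathbf p_c$ only. *)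

From mathcomp Require Import all_boot all_order all_algebra.
From mathcomp Require Import boolp classical_sets reals exp.
Set Implicit Arguments. Unset Strict Implicit. Unset Printing Implicit Defensive.
Import Order.TTheory GRing.Theory Num.Theory.
Local Open Scope ring_scope.
Local Open Scope classical_set_scope.

(* Indices 1..4 of the paper are 0..3 here. *)
Definition i1 : 'I_4 := @Ordinal 4 0 isT.
Definition i2 : 'I_4 := @Ordinal 4 1 isT.
Definition i3 : 'I_4 := @Ordinal 4 2 isT.
Definition i4 : 'I_4 := @Ordinal 4 3 isT.

Section Defs.
Variable R : realType.

Definition in_simplex (p : 'I_4 -> R) : Prop :=
  (forall i, 0 <= p i) /\ \sum_(i < 4) p i = 1.

Definition in_box (a b : R) (v : 'I_4 -> R) : Prop :=
  forall i, a <= v i <= b.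

Definition Lv (v p : 'I_4 -> R) : R :=
  v i4 * p i1 * p i2 * p i3 + v i3 * p i1 * p i2 * p i4
  + v i2 * p i1 * p i3 * p i4 + v i1 * p i2 * p i3 * p i4.

Definition is_maximizer (v p : 'I_4 -> R) : Prop :=
  in_simplex p /\ forall q, in_simplex q -> Lv v q <= Lv v p.

Definition Lmax (v : 'I_4 -> R) : R := sup [set Lv v p | p in in_simplex].

Definition rel_loss (pc vt : 'I_4 -> R) : R :=
  1 - powR (Lv vt pc / Lmax vt) (3%:R^-1).

(* R_max(c), a function of p_c only *)
Definition Rmax (a b : R) (pc : 'I_4 -> R) : R :=
  sup [set rel_loss pc vt | vt in in_box a b].

Definition uniform_design : 'I_4 -> R := fun _ => 4%:R^-1.
End Defs.

From mathcomp Require Import all_boot all_order all_algebra.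
From mathcomp Require Import boolp classical_sets reals exp.
From mathcomp Require Import ring lra.
Set Implicit Arguments. Unset Strict Implicit.
Import Order.TTheory GRing.Theory Num.Theory.
Local Open Scope ring_scope.
Local Open Scope classical_set_scope.

(* The uniform design maximizes L_v for constant v, so it suffices to show
   Rmax(uniform) < Rmax(p) for every other design p.  Summing L_w(p) over the four
   cyclic shifts w of v gives (sum_i v_i) e3(p), with e3 the third elementary
   symmetric polynomial, and e3(p) <= 1/16 with equality only at the uniform design.
   The shifts preserve the box and max L, so some shift w has
   L_w(p) <= (sum_i v_i) e3(p) / 4, while L_v(uniform) = (sum_i v_i) / 64 and
   max L_v <= (sum_i v_i) / 16.  Hence the efficiency ratio of p at w is below that
   of the uniform design at v by at least 1/16 - e3(p), a margin independent of v;
   cube roots on [0,1] shrink it at most by the factor 3. *)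

Lemma exists_le_mean (R : realDomainType) n (F : 'I_n.+1 -> R) :
  exists i, F i *+ n.+1 <= \sum_j F j.
Proof.
apply: contrapT => /forallNP hF.
have : \sum_(i < n.+1) \sum_j F j < \sum_(i < n.+1) F i *+ n.+1.
  apply: ltr_sum => [|i _]; first by apply/hasP; exists ord0; rewrite ?mem_index_enum.
  by rewrite ltNge; apply/negP/hF.
by rewrite sumr_const card_ord sumrMnl ltxx.
Qed.

Lemma cube_gap (R : realFieldType) (x y d : R) : 0 <= x -> 0 <= y -> 0 <= d ->
  y ^+ 3 + d <= x ^+ 3 -> x ^+ 3 <= 1 -> y + d / 3%:R <= x.
Proof.
move=> hx hy hd hyx hx1.
have x_le1 : x <= 1 by rewrite -(expr_le1 (n := 3)).
have y_lex : y <= x by rewrite -(ler_pXn2r (n := 3)) ?nnegrE //; lra.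
have hq : x ^+ 2 + x * y + y ^+ 2 <= 3%:R.
  have : x ^+ 2 <= 1 by rewrite expr_le1.
  have : y ^+ 2 <= 1 by rewrite expr_le1 //; lra.
  have : x * y <= 1 by apply: mulr_ile1 => //; lra.
  lra.
have cube_diff : x ^+ 3 = y ^+ 3 + (x - y) * (x ^+ 2 + x * y + y ^+ 2) by ring.
rewrite cube_diff in hyx.
have : (x - y) * (x ^+ 2 + x * y + y ^+ 2) <= (x - y) * 3%:R by apply: ler_wpM2l; lra.
lra.
Qed.

Lemma powR_inv3_gap (R : realType) (x y d : R) : 0 <= y -> 0 <= d ->
  y + d <= x -> x <= 1 -> y `^ 3%:R^-1 + d / 3%:R <= x `^ 3%:R^-1.
Proof.
have cubeK z : 0 <= z -> (z `^ 3%:R^-1) ^+ 3 = z.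
  by move=> z0; rewrite -powR_mulrn ?powR_ge0 // -powRrM mulVf ?powRr1 ?pnatr_eq0.
move=> hy hd hyx hx1; apply: cube_gap; rewrite ?powR_ge0 // !cubeK //; lra.
Qed.

Lemma ordS_I4 : [/\ ordS i1 = i2, ordS i2 = i3, ordS i3 = i4 & ordS i4 = i1].
Proof. by split; apply/val_inj. Qed.

Section Design22.
Variable R : realType.
Implicit Types (v p q : 'I_4 -> R).

Local Notation uniform := (uniform_design R).

Lemma sum4 q : \sum_(i < 4) q i = q i1 + q i2 + q i3 + q i4.
Proof.
rewrite !big_ord_recl big_ord0 addr0 !addrA.
by congr (_ + _ + _ + _); congr q; apply/val_inj.
Qed.

Lemma ord4P (P : 'I_4 -> Prop) : P i1 -> P i2 -> P i3 -> P i4 -> forall i, P i.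
Proof.
move=> h1 h2 h3 h4 [[|[|[|[|n]]]] Hi] //.
- by have -> : Ordinal Hi = i1 by apply/val_inj.
- by have -> : Ordinal Hi = i2 by apply/val_inj.
- by have -> : Ordinal Hi = i3 by apply/val_inj.
- by have -> : Ordinal Hi = i4 by apply/val_inj.
Qed.

Definition e3 q :=
  q i1 * q i2 * q i3 + q i1 * q i2 * q i4 + q i1 * q i3 * q i4 + q i2 * q i3 * q i4.

Lemma e3_defect q : \sum_i q i = 1 ->
  16%:R^-1 - e3 q = (q i1 + q i2) * (q i3 - q i4) ^+ 2 / 4%:R
    + (q i3 + q i4) * (q i1 - q i2) ^+ 2 / 4%:R + (q i1 + q i2 - q i3 - q i4) ^+ 2 / 16%:R.
Proof.
rewrite /e3 sum4 => hs; have -> : q i4 = 1 - q i1 - q i2 - q i3 by lra.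
by field.
Qed.

Lemma e3_lt q : in_simplex q -> q <> uniform -> e3 q < 16%:R^-1.
Proof.
move=> [hq0 hs] hqu; rewrite -subr_gt0 e3_defect //; rewrite sum4 in hs.
have := hq0 i1; have := hq0 i2; have := hq0 i3; have := hq0 i4 => q4 q3 q2 q1.
set T1 := _ * _ / 4%:R; set T2 := _ * _ / 4%:R; set T3 := _ ^+ 2 / 16%:R.
have T1_ge0 : 0 <= T1 by rewrite /T1 mulr_ge0 ?(mulr_ge0 _ (sqr_ge0 _)) //; lra.
have T2_ge0 : 0 <= T2 by rewrite /T2 mulr_ge0 ?(mulr_ge0 _ (sqr_ge0 _)) //; lra.
have T3_ge0 : 0 <= T3 by rewrite /T3 mulr_ge0 ?sqr_ge0 //; lra.
rewrite lt_neqAle !addr_ge0 // andbT; apply: contra_notN hqu => /eqP defect0.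
have [T1_0 T2_0 T3_0] : [/\ T1 = 0, T2 = 0 & T3 = 0] by split; lra.
have sq0 (x : R) : x ^+ 2 = 0 -> x = 0 by move/eqP; rewrite sqrf_eq0 => /eqP.
have t0 : q i1 + q i2 - q i3 - q i4 = 0 by apply: sq0; move: T3_0; rewrite /T3; lra.
have q34 : q i3 - q i4 = 0.
  by apply: sq0; move: T1_0; rewrite /T1 (_ : q i1 + q i2 = 2%:R^-1); lra.
have q12 : q i1 - q i2 = 0.
  by apply: sq0; move: T2_0; rewrite /T2 (_ : q i3 + q i4 = 2%:R^-1); lra.
by apply: funext; apply: ord4P; rewrite /uniform_design; lra.
Qed.

Lemma e3_le q : in_simplex q -> e3 q <= 16%:R^-1.
Proof.
move=> hq; have [->|hqu] := pselect (q = uniform); last exact/ltW/e3_lt.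
by rewrite /e3 /uniform_design le_eqVlt; apply/orP; left; apply/eqP; field.
Qed.

Lemma Lv_ge0 v q : (forall i, 0 <= v i) -> (forall i, 0 <= q i) -> 0 <= Lv v q.
Proof. by move=> hv hq; rewrite /Lv !addr_ge0 ?mulr_ge0. Qed.

Lemma Lv_le_e3 v q : (forall i, 0 <= v i) -> (forall i, 0 <= q i) ->
  Lv v q <= (\sum_i v i) * e3 q.
Proof.
move=> hv hq; rewrite sum4 -subr_ge0.
have -> : (v i1 + v i2 + v i3 + v i4) * e3 q - Lv v q =
  (v i1 + v i2 + v i3) * (q i1 * q i2 * q i3) + (v i1 + v i2 + v i4) * (q i1 * q i2 * q i4)
  + (v i1 + v i3 + v i4) * (q i1 * q i3 * q i4) + (v i2 + v i3 + v i4) * (q i2 * q i3 * q i4).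
  by rewrite /e3 /Lv; ring.
by rewrite !addr_ge0 ?mulr_ge0 //; rewrite !addr_ge0.
Qed.

Lemma Lv_uniform v : Lv v uniform = (\sum_i v i) / 64%:R.
Proof. by rewrite sum4 /Lv /uniform_design; field. Qed.

Lemma simplex_uniform : in_simplex uniform.
Proof. by split=> [i|]; rewrite ?sum4 /uniform_design; lra. Qed.

Lemma Lv_le_sum v q : (forall i, 0 <= v i) -> in_simplex q ->
  Lv v q <= (\sum_i v i) / 16%:R.
Proof.
move=> hv hq; apply: (le_trans (Lv_le_e3 hv (proj1 hq))).
by rewrite ler_wpM2l ?e3_le ?sumr_ge0.
Qed.

Lemma Lv_le_Lmax v q : (forall i, 0 <= v i) -> in_simplex q -> Lv v q <= Lmax v.
Proof.
move=> hv hq; apply: ub_le_sup; last by exists q.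
by exists ((\sum_i v i) / 16%:R) => _ [r hr <-]; exact: Lv_le_sum.
Qed.

Lemma Lmax_le_sum v : (forall i, 0 <= v i) -> Lmax v <= (\sum_i v i) / 16%:R.
Proof.
move=> hv; apply: ge_sup; first by exists (Lv v uniform), uniform => //; exact: simplex_uniform.
by move=> _ [r hr <-]; exact: Lv_le_sum.
Qed.

Lemma in_simplex_comp q (f : 'I_4 -> 'I_4) : injective f -> in_simplex q -> in_simplex (q \o f).
Proof. by move=> hf [hq0 hs]; split=> [i|]; [exact: hq0|rewrite (reindex_inj hf) in hs]. Qed.

Definition rot v : 'I_4 -> R := fun i => v (ordS i).

Lemma Lv_rot v q : Lv (rot v) (rot q) = Lv v q.
Proof. by rewrite /Lv /rot; case: ordS_I4 => -> -> -> ->; ring. Qed.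

Lemma Lmax_rot v : Lmax (rot v) = Lmax v.
Proof.
rewrite /Lmax; congr sup; apply/seteqP; split=> _ [p hp <-].
- exists (p \o @ord_pred 4); first exact: (in_simplex_comp (can_inj (@ord_predK 4)) hp).
  by rewrite -Lv_rot; congr Lv; apply: funext => i; rewrite /rot /= ordSK.
- by exists (rot p); [exact: (in_simplex_comp (@ordS_inj 4) hp)|rewrite Lv_rot].
Qed.

Lemma in_box_rot a b v : in_box a b v -> in_box a b (rot v).
Proof. by move=> hv i; exact: hv. Qed.

Lemma sum_Lv_rot v p : \sum_(k < 4) Lv (iter k rot v) p = (\sum_i v i) * e3 p.
Proof.
rewrite (sum4 v) !big_ord_recl big_ord0 /= /Lv /rot /e3.
by case: ordS_I4 => s1 s2 s3 s4; rewrite !(s1, s2, s3, s4); ring.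
Qed.

Lemma exists_rot_Lv_le v p : exists k, Lv (iter k rot v) p <= (\sum_i v i) * e3 p / 4%:R.
Proof.
have [k hk] := exists_le_mean (fun k : 'I_4 => Lv (iter k rot v) p).
by exists k; rewrite -sum_Lv_rot ler_pdivlMr ?ltr0n // mulr_natr.
Qed.

Lemma Lmax_iter_rot k v : Lmax (iter k rot v) = Lmax v.
Proof. by elim: k => //= k <-; exact: Lmax_rot. Qed.

Lemma in_box_iter_rot a b k v : in_box a b v -> in_box a b (iter k rot v).
Proof. by move=> hv; elim: k => //= k; exact: in_box_rot. Qed.

Lemma in_box_gt0 a b v : 0 < a -> in_box a b v -> forall i, 0 < v i.
Proof. by move=> a_gt0 hv i; have /andP[+ _] := hv i; exact: lt_le_trans. Qed.

Lemma rel_loss_le_Rmax a b p v : in_box a b v -> rel_loss p v <= Rmax a b p.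
Proof.
move=> hv; apply: ub_le_sup; last by exists v.
by exists 1 => _ [w _ <-]; rewrite /rel_loss lerBlDr lerDl powR_ge0.
Qed.

Lemma Rmax_le a b p M : a <= b ->
  (forall v, in_box a b v -> rel_loss p v <= M) -> Rmax a b p <= M.
Proof.
move=> hab hM; apply: ge_sup; last by move=> _ [w hw <-]; exact: hM.
by exists (rel_loss p (fun=> a)), (fun=> a) => // i; rewrite lexx hab.
Qed.

Lemma rel_loss_uniform_gap v w p : (forall i, 0 < v i) -> (forall i, 0 <= w i) ->
  in_simplex p -> Lmax w = Lmax v -> Lv w p <= (\sum_i v i) * e3 p / 4%:R ->
  rel_loss uniform v + (16%:R^-1 - e3 p) / 3%:R <= rel_loss p w.
Proof.
move=> v_gt0 w_ge0 hp Lmax_wv hw; rewrite /rel_loss Lmax_wv Lv_uniform.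
set d := 16%:R^-1 - e3 p; set S := \sum_i v i; set M := Lmax v.
have d_ge0 : 0 <= d by rewrite subr_ge0 e3_le.
have v_ge0 i : 0 <= v i := ltW (v_gt0 i).
have S_gt0 : 0 < S by rewrite /S sum4; have := v_gt0 i1; have := v_gt0 i2;
  have := v_gt0 i3; have := v_gt0 i4; lra.
have M_ge : S / 64%:R <= M by rewrite -Lv_uniform; exact: Lv_le_Lmax simplex_uniform.
have M_le : M <= S / 16%:R := Lmax_le_sum v_ge0.
have M_gt0 : 0 < M by apply: lt_le_trans M_ge; rewrite divr_gt0 ?ltr0n.
suff : (Lv w p / M) `^ 3%:R^-1 + d / 3%:R <= (S / 64%:R / M) `^ 3%:R^-1 by lra.
apply: powR_inv3_gap => //; last by rewrite ler_pdivrMr // mul1r.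
  by rewrite divr_ge0 ?(ltW M_gt0) // Lv_ge0 //; case: hp.
have dM_le : d * M <= d * (S / 16%:R) by rewrite ler_wpM2l.
have dS_ge0 : 0 <= d * S by rewrite mulr_ge0 // ltW.
rewrite -(ler_pM2r M_gt0) mulrDl !divfK ?gt_eqF //.
by rewrite -/S /d in hw dM_le dS_ge0 *; lra.
Qed.

Lemma Rmax_uniform_lt a b p : 0 < a <= b -> in_simplex p -> p <> uniform ->
  Rmax a b uniform < Rmax a b p.
Proof.
move=> /andP[a_gt0 le_ab] hp hpu.
have d_gt0 : 0 < 16%:R^-1 - e3 p by rewrite subr_gt0 e3_lt.
suff : Rmax a b uniform <= Rmax a b p - (16%:R^-1 - e3 p) / 3%:R by lra.
apply: Rmax_le => // v hv.
have [k hk] := exists_rot_Lv_le v p.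
have hw := in_box_iter_rot k hv.
have := rel_loss_le_Rmax p hw.
have := rel_loss_uniform_gap (in_box_gt0 a_gt0 hv) (fun i => ltW (in_box_gt0 a_gt0 hw i))
  hp (Lmax_iter_rot k v) hk.
lra.
Qed.

Lemma is_maximizer_uniform_const c : 0 <= c -> is_maximizer (fun=> c) uniform.
Proof.
move=> c_ge0; split=> [|q hq]; first exact: simplex_uniform.
have -> : Lv (fun=> c) q = c * e3 q by rewrite /Lv /e3; ring.
rewrite Lv_uniform sum4 (_ : (c + c + c + c) / 64%:R = c * 16%:R^-1); last by field.
by rewrite ler_wpM2l ?e3_le.
Qed.
End Design22.

Theorem theorem3 (R : realType) (a b : R) (hab : 0 < a <= b)
    (vc pc : 'I_4 -> R) (hvc : in_box a b vc) (hpc : is_maximizer vc pc) :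
  (forall (vc' pc' : 'I_4 -> R), in_box a b vc' -> is_maximizer vc' pc' ->
     Rmax a b pc <= Rmax a b pc') <->
  pc = uniform_design R.
Proof.
have [a_gt0 le_ab] := andP hab.
split=> [pc_min | -> vc' pc' _ [hpc' _]].
- apply: contrapT => pc_nu.
  have box_a : in_box a b (fun=> a) by move=> i; rewrite lexx le_ab.
  have := pc_min _ _ box_a (is_maximizer_uniform_const (ltW a_gt0)).
  by rewrite leNgt Rmax_uniform_lt //; case: hpc.
- have [-> // | pc'_nu] := pselect (pc' = uniform_design R).
  exact/ltW/Rmax_uniform_lt.
Qed.
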